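(* Let $G$ be a bipartite permutation graph with a transitive vertex ordering $<$ and let $e,e'\in E(G)$ with $l(e)<l(e')$. (a) If $r(e)<l(e')$, then $\{e,e'\}$ is a uniquely restricted matching in $G$. (b) If $l(e')<r(e)<r(e')$, then $\{e,e'\}$ is a uniquely restricted matching in $G$ if and only if $l(e)r(e')\notin E(G)$. (c) If $r(e')<r(e)$, then $\{e,e'\}$ is not a uniquely restricted matching in $G$.
   Context: Graphs are finite, simple, undirected. A permutation graph is a graph isomorphic to some $G_\pi$, where for a permutation $\pi$ of $\{1,\dots,n\}$, $G_\pi$ has vertex set $\{1,\dots,n\}$ and edges $ij$ with $(i-j)(\pi(i)-\pi(j))<0$; a bipartite permutation graph is a permutation graph that is bipartite. An ordering $<$ of $V(G)$ is a transitive vertex ordering if for all $u<v<w$: (a) $uv,vw\in E(G)$ implies $uw\in E(G)$, and (b) $uw\in E(G)$ implies $uv\in E(G)$ or $vw\in E(G)$. For an edge $e=uv$, $l(e)=\min_<\{u,v\}$ and $r(e)=\max_<\{u,v\}$. A matching is a set of pairwise vertex-disjoint edges; it is uniquely restricted if no other matching of $G$ matches exactly the same vertex set. *)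

From mathcomp Require Import all_boot all_order all_fingroup.
Set Implicit Arguments. Unset Strict Implicit. Unset Printing Implicit Defensive.

Section Graphs.
Variable T : finType.

Definition simple_graph (adj : rel T) : Prop :=
  symmetric adj /\ irreflexive adj.

Definition perm_graph_adj (n : nat) (pi : 'S_n) (i j : 'I_n) : bool :=
  (i != j) && ((i < j) != (pi i < pi j)).

Definition is_permutation_graph (adj : rel T) : Prop :=
  exists (n : nat) (pi : 'S_n) (f : T -> 'I_n),
    bijective f /\ forall u v, adj u v = perm_graph_adj pi (f u) (f v).

Definition is_bipartite (adj : rel T) : Prop :=
  exists c : T -> bool, forall u v, adj u v -> c u != c v.

Definition bipartite_permutation_graph (adj : rel T) : Prop :=
  simple_graph adj /\ is_permutation_graph adj /\ is_bipartite adj.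

(* A linear ordering of V(G) is given by an injective rank function
   (u < v iff rk u < rk v). *)
Definition transitive_vertex_ordering (adj : rel T) (rk : T -> nat) : Prop :=
  injective rk /\
  forall u v w, rk u < rk v -> rk v < rk w ->
    (adj u v -> adj v w -> adj u w) /\
    (adj u w -> adj u v \/ adj v w).

Definition is_edge (adj : rel T) (e : {set T}) : Prop :=
  exists u v, adj u v /\ e = [set u; v].

Definition is_matching (adj : rel T) (M : {set {set T}}) : Prop :=
  (forall e, e \in M -> is_edge adj e) /\
  (forall e f, e \in M -> f \in M -> e != f -> [disjoint e & f]).

Definition matched_vertices (M : {set {set T}}) : {set T} := cover M.

Definition uniquely_restricted (adj : rel T) (M : {set {set T}}) : Prop :=
  is_matching adj M /\
  forall M', is_matching adj M' ->
    matched_vertices M' = matched_vertices M -> M' = M.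

End Graphs.

From mathcomp Require Import all_boot all_order all_fingroup.
From mathcomp Require Import zify.
Set Implicit Arguments. Unset Strict Implicit. Unset Printing Implicit Defensive.

(* Two disjoint edges ab, cd form a uniquely restricted matching exactly when
   {a, b, c, d} carries no other perfect matching, i.e. unless ac, bd or ad, bc
   are both edges. In a bipartite graph a transitive ordering has no monotone
   path u < v < w of two edges (closing it by uw would give a triangle), and
   below every edge uw each vertex u < v < w is adjacent to u or to w. These two
   rules decide the relevant edges: ac is never one (a < c < d), bc is one as
   soon as c < b, ad is one when d < b, and bc is not one when b < c. *)

Section Uniq4.
Variables (T : eqType) (a b c d : T).
Hypothesis uabcd : uniq [:: a; b; c; d].

Lemma uniq4_swap_mid : uniq [:: a; c; b; d].
Proof.
by rewrite (perm_uniq (s2 := [:: a; b; c; d])) // perm_cons (perm_catCA [:: c] [:: b] [:: d]).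
Qed.

Lemma uniq4_swap_last : uniq [:: a; b; d; c].
Proof.
by rewrite (perm_uniq (s2 := [:: a; b; c; d])) // !perm_cons (perm_catC [:: d] [:: c]).
Qed.

Lemma uniq4_swap_pairs : uniq [:: c; d; a; b].
Proof. by rewrite (perm_uniq (s2 := [:: a; b; c; d])) // (perm_catC [:: c; d] [:: a; b]). Qed.

End Uniq4.

Section PairMatchings.
Variables (T : finType) (adj : rel T).
Hypotheses (adj_sym : symmetric adj) (adj_irr : irreflexive adj).

Lemma cover_set2 (A B : {set T}) : cover [set A; B] = A :|: B.
Proof. by rewrite /cover bigcup_setU !big_set1. Qed.

Lemma disjoint_set2 (a b c d : T) :
  uniq [:: a; b; c; d] -> [disjoint [set a; b] & [set c; d]].
Proof.
rewrite /= !inE !negb_or => /and4P[/and3P[_ ac ad] /andP[bc bd] _ _].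
apply/pred0P => z /=; rewrite !inE; apply/negbTE/negP.
by case/andP=> /orP[]/eqP-> /orP[]/eqP E; [move: ac|move: ad|move: bc|move: bd]; rewrite E eqxx.
Qed.

Lemma is_matching_set2 (a b c d : T) :
  uniq [:: a; b; c; d] -> adj a b -> adj c d ->
  is_matching adj [set [set a; b]; [set c; d]].
Proof.
move=> uabcd ab cd; split=> [e | e f].
  by rewrite !inE => /orP[]/eqP->; [exists a, b | exists c, d].
rewrite !inE => /orP[]/eqP-> /orP[]/eqP-> //; rewrite ?eqxx // => _.
  exact: disjoint_set2.
by rewrite disjoint_sym; apply: disjoint_set2.
Qed.

Lemma matching_meet_eq (M : {set {set T}}) (e f : {set T}) (z : T) :
  is_matching adj M -> e \in M -> f \in M -> z \in e -> z \in f -> e = f.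
Proof.
move=> [_ disjM] eM fM ze zf; apply/eqP; apply: contraTT isT => nef.
by have /disjointFr/(_ ze) := disjM _ _ eM fM nef; rewrite zf.
Qed.

Lemma matching_partner (M : {set {set T}}) (z : T) :
  is_matching adj M -> z \in cover M ->
  exists w, [/\ adj z w, w \in cover M & [set z; w] \in M].
Proof.
move=> [edgeM _] /bigcupP[e eM ze]; have [u [v [uv De]]] := edgeM e eM.
have inM w : w \in e -> w \in cover M by move=> we; apply/bigcupP; exists e.
move: ze; rewrite De !inE => /orP[]/eqP->.
- by exists v; rewrite uv inM ?De ?set22 -?De.
- by exists u; rewrite adj_sym uv inM ?De ?set21 // setUC -De.
Qed.

Lemma not_uniquely_restricted_swap (a b c d : T) :
  uniq [:: a; b; c; d] -> adj a c -> adj b d ->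
  ~ uniquely_restricted adj [set [set a; b]; [set c; d]].
Proof.
move=> uabcd ac bd [_ urM].
have := urM _ (is_matching_set2 (uniq4_swap_mid uabcd) ac bd).
rewrite /matched_vertices !cover_set2 setUACA => /(_ erefl) swapM.
have : [set a; c] \in [set [set a; b]; [set c; d]] by rewrite -swapM !inE eqxx.
rewrite !inE.
move: uabcd; rewrite /= !inE !negb_or => /and4P[/and3P[_ ac' ad'] /andP[bc' _] _ _].
case/orP=> /eqP/setP => [/(_ c)|/(_ a)]; rewrite !inE eqxx ?orbT /=.
- by rewrite eq_sym (negbTE ac') eq_sym (negbTE bc').
- by rewrite (negbTE ac') (negbTE ad').
Qed.

Lemma set2_in_matching (M : {set {set T}}) (a b c d : T) :
  uniq [:: a; b; c; d] -> ~~ (adj a c && adj b d) -> ~~ (adj a d && adj b c) ->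
  is_matching adj M -> cover M = [set a; b] :|: [set c; d] -> [set a; b] \in M.
Proof.
move=> uabcd noacbd noadbc matM covM.
move: (uabcd); rewrite /= !inE !negb_or => /and4P[/and3P[ab ac ad] /andP[bc bd] _ _].
have covE z : z \in cover M = [|| z == a, z == b, z == c | z == d].
  by rewrite covM !inE !orbA.
have [w [aw]] : exists w, [/\ adj a w, w \in cover M & [set a; w] \in M].
  by apply: matching_partner; rewrite // covE eqxx.
have [x [bx]] : exists x, [/\ adj b x, x \in cover M & [set b; x] \in M].
  by apply: matching_partner; rewrite // covE eqxx orbT.
have no_common_partner y : y \in [set c; d] -> [set a; y] \in M -> [set b; y] \in M -> False.
  move=> yin ayM byM; have /setP/(_ a) := matching_meet_eq matM ayM byM (set22 a y) (set22 b y).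
  rewrite !inE eqxx (negbTE ab) /=; move: yin; rewrite !inE => /orP[]/eqP->.
    by rewrite (negbTE ac).
  by rewrite (negbTE ad).
rewrite !covE => /or4P[]/eqP xE; subst x => bxM w_cov awM; first by rewrite setUC.
- by rewrite adj_irr in bx.
- case/or4P: w_cov => /eqP wE; rewrite wE in aw awM; first by rewrite adj_irr in aw.
  + by [].
  + by case: (no_common_partner c); rewrite ?set21.
  + by move: noadbc; rewrite aw bx.
- case/or4P: w_cov => /eqP wE; rewrite wE in aw awM; first by rewrite adj_irr in aw.
  + by [].
  + by move: noacbd; rewrite aw bx.
  + by case: (no_common_partner d); rewrite ?set22.
Qed.

Lemma uniquely_restricted_set2 (a b c d : T) :
  uniq [:: a; b; c; d] -> adj a b -> adj c d ->
  uniquely_restricted adj [set [set a; b]; [set c; d]] <->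
  ~~ (adj a c && adj b d) && ~~ (adj a d && adj b c).
Proof.
move=> uabcd ab cd; split=> [urM | /andP[noacbd noadbc]].
  apply/andP; split; apply/negP => /andP[ad' bc'].
    exact: not_uniquely_restricted_swap urM.
  apply: (not_uniquely_restricted_swap (uniq4_swap_last uabcd) ad' bc').
  by rewrite (setUC [set d]).
split=> [|M matM]; first exact: is_matching_set2.
rewrite /matched_vertices cover_set2 => covM.
have abM : [set a; b] \in M by apply: set2_in_matching covM.
have cdM : [set c; d] \in M.
  apply: (set2_in_matching (c := a) (d := b) (uniq4_swap_pairs uabcd)) => //.
  - by rewrite adj_sym [adj d _]adj_sym.
  - by rewrite andbC adj_sym [adj c _]adj_sym.
  - by rewrite setUC.
apply/setP => e; apply/idP/idP => [eM | ]; last by rewrite !inE => /orP[]/eqP->.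
have [u [v [_ De]]] := matM.1 e eM; subst e.
have : u \in cover M by apply/bigcupP; exists [set u; v]; rewrite ?set21.
rewrite covM inE => /orP[] uin.
  by rewrite (matching_meet_eq matM eM abM (set21 u v) uin) !inE eqxx.
by rewrite (matching_meet_eq matM eM cdM (set21 u v) uin) !inE eqxx orbT.
Qed.

End PairMatchings.

Lemma bipartite_triangle_free (T : finType) (adj : rel T) (u v w : T) :
  is_bipartite adj -> adj u v -> adj v w -> ~~ adj u w.
Proof.
case=> col colP uv vw; apply/negP => /colP.
by move: (colP _ _ uv) (colP _ _ vw); case: (col u); case: (col v); case: (col w).
Qed.

Section BipartiteTransitiveOrdering.
Variables (T : finType) (adj : rel T) (rk : T -> nat).
Hypotheses (adj_bip : is_bipartite adj) (rk_tvo : transitive_vertex_ordering adj rk).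

Lemma no_monotone_path (u v w : T) :
  rk u < rk v -> rk v < rk w -> adj u v -> ~~ adj v w.
Proof.
move=> uv vw adj_uv; apply/negP => adj_vw.
have [closed _] := rk_tvo.2 u v w uv vw.
by have /negP := bipartite_triangle_free adj_bip adj_uv adj_vw; apply; apply: closed.
Qed.

Lemma adj_mid (u v w : T) :
  rk u < rk v -> rk v < rk w -> adj u w -> adj u v || adj v w.
Proof. by move=> uv vw /(rk_tvo.2 u v w uv vw).2 [] ->; rewrite ?orbT. Qed.

End BipartiteTransitiveOrdering.

(* e = ab with l(e)=a, r(e)=b (rk a < rk b); e' = cd with l(e')=c, r(e')=d. *)
Theorem lemma7 (T : finType) (adj : rel T) (rk : T -> nat)
  (a b c d : T) :
  bipartite_permutation_graph adj ->
  transitive_vertex_ordering adj rk ->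
  adj a b -> rk a < rk b ->
  adj c d -> rk c < rk d ->
  rk a < rk c ->
  ((rk b < rk c) ->
     uniquely_restricted adj [set [set a; b]; [set c; d]]) /\
  ((rk c < rk b < rk d) ->
     (uniquely_restricted adj [set [set a; b]; [set c; d]] <-> ~~ adj a d)) /\
  ((rk d < rk b) ->
     ~ uniquely_restricted adj [set [set a; b]; [set c; d]]).
Proof.
move=> [[adj_sym adj_irr] [_ bip]] tvo ab ltab cd ltcd ltac.
have uabcd : rk b != rk c -> rk b != rk d -> uniq [:: a; b; c; d].
  by move=> *; apply: (@map_uniq _ _ rk); rewrite /= !inE; lia.
have ur_iff bc bd := uniquely_restricted_set2 adj_sym adj_irr (uabcd bc bd) ab cd.
have nac : ~~ adj a c by apply: contraL cd; apply: no_monotone_path ltac ltcd.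
have bc_of_ltcb : rk c < rk b -> adj b c.
  move=> ltcb; have := adj_mid tvo ltac ltcb ab.
  by rewrite (negbTE nac) adj_sym.
split; [|split].
- move=> ltbc; rewrite ur_iff; [|lia..].
  by rewrite (negbTE nac) (negbTE (no_monotone_path bip tvo ltab ltbc ab)) andbF.
- case/andP=> ltcb ltbd; rewrite ur_iff; [|lia..].
  by rewrite (negbTE nac) (bc_of_ltcb ltcb) andbT.
- move=> ltdb; rewrite ur_iff; [|lia..].
  have := adj_mid tvo (ltn_trans ltac ltcd) ltdb ab.
  rewrite (negbTE (no_monotone_path bip tvo ltcd ltdb cd)) orbF => ad.
  by rewrite ad (bc_of_ltcb (ltn_trans ltcd ltdb)) andbF.
Qed.
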